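(* Let $G$ be a finite group, $m\ge 3$ an integer, $R,L,T$ Cayley subsets of $G$, $S\subseteq G$ with $|R|=|L|=|T|-|S|+1$, and $x\in G\setminus S$. Let $\Theta$ be the graph with vertex set $G\times\{0,\dots,m-1\}$ (writing $g_i$ for $(g,i)$, $G_i=G\times\{i\}$) whose edges are: $\{g_0,(rg)_0\}$ ($g\in G,r\in R$); $\{g_1,(lg)_1\}$ ($g\in G,l\in L$); $\{g_0,(sg)_1\}$ ($g\in G,s\in S$); $\{g_i,(tg)_i\}$ ($i\in\{2,\dots,m-1\}$, $g\in G$, $t\in T$); $\{g_i,g_{i+1}\}$ ($g\in G$, $i\in\{1,\dots,m-2\}$); $\{g_0,(xg)_{m-1}\}$ ($g\in G$). Suppose that (a) $\mathrm{BiCay}(G,R,L,S)$ is a $2$-GRR, and (b) for each $i\in\{2,\dots,m-1\}$, $[\Theta(1_0)]\not\cong[\Theta(1_i)]$ and $[\Theta(1_1)]\not\cong[\Theta(1_i)]$. Then $\Theta$ is an $m$-GRR for $G$.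
   Context: A Cayley subset is $X\subseteq G$ with $X=X^{-1}$ and $1\notin X$. $\mathrm{BiCay}(G,R,L,S)$ is the graph with vertex set $G\times\{0,1\}$ and edges $\{g_0,(rg)_0\}$, $\{g_1,(lg)_1\}$, $\{g_0,(sg)_1\}$ for $g\in G$, $r\in R$, $l\in L$, $s\in S$. For a vertex $v$, $\Theta(v)$ is its neighbourhood and $[\Theta(v)]$ the subgraph of $\Theta$ induced on it. An $m$-GRR for $G$ is a finite regular simple graph with a semiregular automorphism group isomorphic to $G$ having $m$ vertex-orbits (here the maps $y_i\mapsto(yg)_i$) and whose full automorphism group is isomorphic to $G$. *)

From mathcomp Require Import all_boot all_fingroup.
Set Implicit Arguments. Unset Strict Implicit. Unset Printing Implicit Defensive.
Local Open Scope group_scope.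

Section Defs.
Variable gT : finGroupType.

Definition cayley_subset (X : {set gT}) : Prop := X^-1 = X /\ 1 \notin X.

Definition rho (n : nat) (g : gT) (v : gT * 'I_n) : gT * 'I_n := (v.1 * g, v.2).

Definition nbhd (V : finType) (e : rel V) (u : V) : {set V} := [set w | e u w].

(* [Theta(u)] is isomorphic to [Theta(w)] (induced subgraphs on neighbourhoods). *)
Definition nbhd_iso (V : finType) (e : rel V) (u w : V) : Prop :=
  exists f : V -> V,
    [/\ {in nbhd e u &, injective f},
        f @: nbhd e u = nbhd e w &
        {in nbhd e u &, forall a b, e (f a) (f b) = e a b}].

Definition is_aut (V : finType) (e : rel V) (p : {perm V}) : Prop :=
  forall a b, e (p a) (p b) = e a b.

(* n-GRR for G: finite regular simple graph on G x {0..n-1}, the maps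
   rho g (y_i |-> (yg)_i) form a semiregular group of automorphisms with n
   vertex-orbits, and the full automorphism group is exactly {rho g | g in G}
   (i.e. Aut(Gamma) = R(G), which is isomorphic to G). *)
Definition is_mGRR (n : nat) (e : rel (gT * 'I_n)) : Prop :=
  [/\ irreflexive e, symmetric e &
      (exists k, forall v, #|nbhd e v| = k)] /\
  [/\ (forall g a b, e (rho g a) (rho g b) = e a b),
      (forall g (v : gT * 'I_n), rho g v = v -> g = 1),
      #|[set [set rho g v | g : gT] | v : gT * 'I_n]| = n &
      (forall p : {perm gT * 'I_n}, is_aut e p ->
         exists g : gT, forall v, p v = rho g v)].

Definition bicay_gen (R L S : {set gT}) (u v : gT * 'I_2) : bool :=
  let: (g, i) := u in let: (h, j) := v in
  [|| [&& (i == 0%N :> nat), (j == 0%N :> nat) & h * g^-1 \in R],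
      [&& (i == 1%N :> nat), (j == 1%N :> nat) & h * g^-1 \in L] |
      [&& (i == 0%N :> nat), (j == 1%N :> nat) & h * g^-1 \in S]].

Definition bicay (R L S : {set gT}) : rel (gT * 'I_2) :=
  fun u v => bicay_gen R L S u v || bicay_gen R L S v u.

Definition theta_gen (m : nat) (R L S T : {set gT}) (x : gT)
    (u v : gT * 'I_m) : bool :=
  let: (g, i) := u in let: (h, j) := v in
  [|| [&& (i == 0%N :> nat), (j == 0%N :> nat) & h * g^-1 \in R],
      [&& (i == 1%N :> nat), (j == 1%N :> nat) & h * g^-1 \in L],
      [&& (i == 0%N :> nat), (j == 1%N :> nat) & h * g^-1 \in S],
      [&& (2 <= i)%N, (i == j :> nat) & h * g^-1 \in T],
      [&& (1 <= i)%N, (i.+1 == j :> nat) & h == g] |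
      [&& (i == 0%N :> nat), (j == (m.-1)%N :> nat) & h * g^-1 == x]].

Definition theta (m : nat) (R L S T : {set gT}) (x : gT) : rel (gT * 'I_m) :=
  fun u v => theta_gen R L S T x u v || theta_gen R L S T x v u.

End Defs.

(* Right translations rho_g preserve Theta, so every layer G_i is homogeneous: Theta is regular
   because the neighbourhood of 1_i has |T| + 2 elements in each layer, and an automorphism
   mapping g_i to h_j induces an isomorphism [Theta(1_i)] ~ [Theta(1_j)].  By (b) every
   automorphism p therefore preserves G_0 u G_1, on which Theta induces BiCay(G,R,L,S), so by
   (a) p agrees there with some rho_g.  Finally rho_g^-1 p fixes G_0 u G_1 pointwise, and since
   for i >= 1 the only neighbour of g_i in a higher layer is g_(i+1), it fixes every layer. *)
From mathcomp Require Import all_boot all_fingroup zify.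
Set Implicit Arguments. Unset Strict Implicit. Unset Printing Implicit Defensive.
Local Open Scope group_scope.

Lemma cayley_subset_memV (gT : finGroupType) (X : {set gT}) h :
  cayley_subset X -> (h^-1 \in X) = (h \in X).
Proof. by case=> XV _; rewrite -{1}XV memV_invg. Qed.

Lemma card_setX1 (T1 T2 : finType) (A : {set T1}) (i : T2) : #|setX A [set i]| = #|A|.
Proof. by rewrite cardsX cards1 muln1. Qed.

Lemma card_setX1U (T1 T2 : finType) (A B : {set T1}) (i j : T2) : i != j ->
  #|setX A [set i] :|: setX B [set j]| = (#|A| + #|B|)%N.
Proof.
move=> neq_ij; rewrite cardsU !card_setX1.
suff -> : setX A [set i] :&: setX B [set j] = set0 by rewrite cards0 subn0.
apply/setP => -[a k]; rewrite !inE.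
by case: (k =P i) => [->|]; rewrite ?(negbTE neq_ij) !andbF.
Qed.

Section NeighbourhoodIso.
Variables (V : finType) (e : rel V).

Lemma aut_nbhd_iso (f : V -> V) : injective f ->
  (forall a b, e (f a) (f b) = e a b) -> forall u, nbhd_iso e u (f u).
Proof.
move=> f_inj f_e u; have [f' fK f'K] := injF_bij f_inj.
exists f; split; first by move=> a b _ _ /f_inj.
  apply/setP => w; apply/imsetP/idP => [[a a_u ->] | w_fu]; first by rewrite inE f_e -inE.
  by exists (f' w); rewrite ?f'K // inE -f_e f'K -inE.
by move=> a b _ _; apply: f_e.
Qed.

Lemma nbhd_iso_card u w : nbhd_iso e u w -> #|nbhd e u| = #|nbhd e w|.
Proof. by case=> f [f_inj <- _]; rewrite card_in_imset. Qed.

End NeighbourhoodIso.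

Section Translation.
Variables (gT : finGroupType) (m : nat).
Implicit Types (g : gT) (v : gT * 'I_m).

Lemma rhoK g : cancel (@rho gT m g) (rho g^-1).
Proof. by case=> a i; rewrite /rho /= mulgK. Qed.

Lemma rhoVK g : cancel (@rho gT m g^-1) (rho g).
Proof. by case=> a i; rewrite /rho /= mulgKV. Qed.

Lemma rho_inj g : injective (@rho gT m g).
Proof. exact: can_inj (rhoK g). Qed.

Lemma card_rho_orbits : #|[set [set rho g v | g : gT] | v : gT * 'I_m]| = m.
Proof.
have orbitE v : [set rho g v | g : gT] = setX [set: gT] [set v.2].
  case: v => h i; apply/setP => -[h' j]; rewrite !inE /=.
  apply/imsetP/eqP => [[g _ [_ ->]] // | ->].
  by exists (h^-1 * h') => //; rewrite /rho /= mulKVg.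
have -> : [set [set rho g v | g : gT] | v : gT * 'I_m] =
          [set setX [set: gT] [set i] | i : 'I_m].
  apply/setP => A; apply/imsetP/imsetP => [[v _ ->] | [i _ ->]].
    by exists v.2; rewrite ?orbitE.
  by exists (1, i); rewrite ?orbitE.
rewrite card_imset ?card_ord // => i j /setP /(_ (1, i)).
by rewrite !inE eqxx /= => /esym/eqP.
Qed.

Variables (e : rel (gT * 'I_m)).
Hypothesis e_rho : forall g a b, e (rho g a) (rho g b) = e a b.

Lemma card_nbhd_rho v : #|nbhd e v| = #|nbhd e (1, v.2)|.
Proof.
case: v => h i; have := aut_nbhd_iso (@rho_inj h) (e_rho h) (1, i).
by rewrite /rho /= mul1g => /nbhd_iso_card.
Qed.

Lemma aut_layer_nbhd_iso (p : {perm gT * 'I_m}) v :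
  is_aut e p -> nbhd_iso e (1, v.2) (1, (p v).2).
Proof.
case: v => h i p_aut; pose f := rho (p (h, i)).1^-1 \o p \o rho h.
have f_inj : injective f by move=> a b /rho_inj /perm_inj /rho_inj.
have f_e a b : e (f a) (f b) = e a b by rewrite /= e_rho p_aut e_rho.
by have := aut_nbhd_iso f_inj f_e (1, i); rewrite /f /rho /= mul1g mulgV.
Qed.

End Translation.

Lemma theta_rho (gT : finGroupType) m (R L S T : {set gT}) x g (a b : gT * 'I_m) :
  theta R L S T x (rho g a) (rho g b) = theta R L S T x a b.
Proof.
case: a b => [a i] [b j]; rewrite /theta /theta_gen /rho /=.
by rewrite !invMg !mulgA !mulgK !(inj_eq (mulIg g)).
Qed.

Lemma theta_up_step (gT : finGroupType) m (R L S T : {set gT}) x h h' (i j : 'I_m) :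
  (1 <= i)%N -> (i < j)%N -> theta R L S T x (h, i) (h', j) -> h' = h /\ val j = i.+1.
Proof.
move=> ge1_i lt_ij; rewrite /theta /theta_gen /=.
have [-> -> ->] : [/\ (i == 0%N :> nat) = false, (j == 0%N :> nat) = false
   & (j == 1%N :> nat) = false] by split; apply/eqP; lia.
have [-> -> ->] : [/\ (j == i :> nat) = false, (i == j :> nat) = false
   & (j.+1 == i)%N = false] by split; apply/eqP; lia.
by rewrite !andbF !orbF /= => /and3P[_ /eqP <- /eqP ->].
Qed.

Section Theta.
Variables (gT : finGroupType) (n : nat) (R L S T : {set gT}) (x : gT).
Local Notation Theta := (@theta gT n.+3 R L S T x).
Implicit Types (v : gT * 'I_n.+3) (p : {perm gT * 'I_n.+3}).

Lemma theta_sym : symmetric Theta.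
Proof. by move=> a b; rewrite /theta orbC. Qed.

Definition low_emb (a : gT * 'I_2) : gT * 'I_n.+3 := (a.1, widen_ord (isT : (2 <= n.+3)%N) a.2).
Definition low_proj v : gT * 'I_2 := (v.1, inord v.2).

Lemma low_projK v : (v.2 < 2)%N -> low_emb (low_proj v) = v.
Proof. by case: v => h i /= lt_i; congr pair; apply: val_inj; rewrite /= inordK. Qed.

Lemma low_emb_inj : injective low_emb.
Proof. by move=> [g i] [h j] [-> eq_ij]; congr pair; apply: val_inj. Qed.

Lemma bicay_theta_low a b : bicay R L S a b = Theta (low_emb a) (low_emb b).
Proof.
case: a b => [g [[|[|i]] lt_i]] [h [[|[|j]] lt_j]] //=.
all: by rewrite /bicay /theta /bicay_gen /theta_gen /= ?orbF.
Qed.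

Lemma aut_fixing_low_layers_id (q : gT * 'I_n.+3 -> gT * 'I_n.+3) :
  injective q -> (forall a b, Theta (q a) (q b) = Theta a b) ->
  (forall v, (v.2 < 2)%N -> q v = v) -> forall v, q v = v.
Proof.
move=> q_inj q_e q_low.
suff fix_upto k v : (v.2 <= k.+1)%N -> q v = v by move=> v; apply: (fix_upto v.2).
elim: k v => [|k IHk] [h j] /= le_j; first exact: q_low.
have [le_jk|gt_jk] := leqP j k.+1; first exact: IHk.
have lt_k : (k.+1 < n.+3)%N by have := ltn_ord j; lia.
pose u := (h, Ordinal lt_k).
have e_u : Theta u (h, j).
  by rewrite /theta /theta_gen /= (_ : val j = k.+2) ?eqxx //=; lia.
have e_qu : Theta u (q (h, j)) by rewrite -(IHk u) // q_e.
case E: (q (h, j)) e_qu => [h' j'] e_qu.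
have [le_j'|gt_j'] := leqP j' k.+1; first by apply: q_inj; rewrite E IHk.
have [-> eq_j'] := theta_up_step (isT : (1 <= Ordinal lt_k)%N) gt_j' e_qu.
by congr pair; apply: val_inj; rewrite eq_j' /=; lia.
Qed.

Lemma aut_agrees_rho_low p :
  is_mGRR (bicay R L S) -> is_aut Theta p -> (forall v, (v.2 < 2)%N -> ((p v).2 < 2)%N) ->
  exists g, forall v, (v.2 < 2)%N -> p v = rho g v.
Proof.
move=> [_ [_ _ _ bicay_aut]] p_aut p_low.
have pK a : low_emb (low_proj (p (low_emb a))) = p (low_emb a).
  by rewrite low_projK // p_low //= ltn_ord.
pose f a := low_proj (p (low_emb a)).
have f_inj : injective f by move=> a b /(congr1 low_emb); rewrite !pK => /perm_inj/low_emb_inj.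
have f_aut : is_aut (bicay R L S) (perm f_inj).
  by move=> a b; rewrite !permE !bicay_theta_low !pK p_aut.
have [g pg] := bicay_aut _ f_aut.
exists g => v lt_v; rewrite -(low_projK lt_v) -pK.
by have := pg (low_proj v); rewrite permE /f => ->.
Qed.

Hypotheses (cR : cayley_subset R) (cL : cayley_subset L) (cT : cayley_subset T).

Lemma theta_irr : irreflexive Theta.
Proof.
case: cR cL cT => [_ R1] [_ L1] [_ T1] [h i]; rewrite /theta /theta_gen /= mulgV.
rewrite (negbTE R1) (negbTE L1) (negbTE T1) !andbF /= !eqxx.
by case: (1 \in S); case: (1 == x); lia.
Qed.

Lemma nbhd_theta0 :
  nbhd Theta (1, ord0) = (x, ord_max) |: (setX R [set ord0] :|: setX S [set inord 1]).
Proof.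
apply/setP => -[h [j lt_j]].
rewrite !inE /theta /theta_gen /= invg1 mulg1 mul1g (cayley_subset_memV _ cR).
rewrite xpair_eqE -!val_eqE /= inordK // !andbF !orbF.
by case: (h \in R); case: (h \in S); case: (h == x); case: (h^-1 \in T); lia.
Qed.

Lemma nbhd_theta1 :
  nbhd Theta (1, inord 1) = (1, inord 2) |: (setX L [set inord 1] :|: setX S^-1 [set ord0]).
Proof.
apply/setP => -[h [j lt_j]].
rewrite !inE /theta /theta_gen /= invg1 mulg1 mul1g (cayley_subset_memV _ cL).
rewrite xpair_eqE (eq_sym 1 h) -!val_eqE /= !inordK // !andbF !orbF.
by case: (h \in L); case: (h^-1 \in S); case: (h == 1); lia.
Qed.

Lemma nbhd_theta_mid k : (k < n)%N ->
  nbhd Theta (1, inord k.+2) = (1, inord k.+1) |: ((1, inord k.+3) |: setX T [set inord k.+2]).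
Proof.
move=> lt_kn; apply/setP => -[h [j lt_j]].
rewrite !inE /theta /theta_gen /= invg1 mulg1 mul1g (cayley_subset_memV _ cT).
rewrite !xpair_eqE (eq_sym 1 h) -!val_eqE /= !inordK ?andbF ?orbF; try lia.
by case: (h \in T); case: (h == 1); lia.
Qed.

Lemma nbhd_theta_top :
  nbhd Theta (1, ord_max) = (1, inord n.+1) |: ((x^-1, ord0) |: setX T [set ord_max]).
Proof.
apply/setP => -[h [j lt_j]].
rewrite !inE /theta /theta_gen /= invg1 mulg1 mul1g (cayley_subset_memV _ cT).
rewrite !xpair_eqE (eq_sym 1 h) (can2_eq invgK invgK) -!val_eqE /= !inordK // ?andbF ?orbF.
by case: (h \in T); case: (h == 1); case: (h == x^-1); lia.
Qed.

Hypotheses (card_RL : #|R| = #|L|) (card_RST : (#|R| + #|S| = #|T| + 1)%N).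

Lemma card_nbhd_theta (i : 'I_n.+3) : #|nbhd Theta (1, i)| = (#|T| + 2)%N.
Proof.
case: i => -[|[|k]] lt_i.
- rewrite (_ : Ordinal lt_i = ord0) ?nbhd_theta0; last exact: val_inj.
  rewrite cardsU1 card_setX1U -?val_eqE /= ?inordK // card_RST.
  rewrite !inE -!val_eqE /= inordK // !andbF; lia.
- rewrite (_ : Ordinal lt_i = inord 1) ?nbhd_theta1; last by apply: val_inj; rewrite /= inordK.
  rewrite cardsU1 card_setX1U -?val_eqE /= ?inordK // card_invg -card_RL card_RST.
  rewrite !inE -!val_eqE /= !inordK // !andbF; lia.
- have [lt_kn|eq_kn] : (k < n \/ k = n)%N by lia.
  + rewrite (_ : Ordinal lt_i = inord k.+2) ?nbhd_theta_mid //; last first.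
      by apply: val_inj; rewrite /= inordK.
    rewrite !cardsU1 card_setX1 !inE !xpair_eqE -!val_eqE /= !inordK; lia.
  + rewrite (_ : Ordinal lt_i = ord_max) ?nbhd_theta_top; last by apply: val_inj; rewrite /= eq_kn.
    rewrite !cardsU1 card_setX1 !inE !xpair_eqE -!val_eqE /= !inordK //; lia.
Qed.

Hypothesis low_not_iso_high :
  forall i j : 'I_n.+3, (i < 2)%N -> (2 <= j)%N -> ~ nbhd_iso Theta (1, i) (1, j).

Lemma theta_aut_rho p :
  is_mGRR (bicay R L S) -> is_aut Theta p -> exists g, forall v, p v = rho g v.
Proof.
move=> bicay_GRR p_aut.
have p_low v : (v.2 < 2)%N -> ((p v).2 < 2)%N.
  move=> lt_v; rewrite ltnNge; apply/negP => ge_pv.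
  exact: low_not_iso_high lt_v ge_pv (aut_layer_nbhd_iso (@theta_rho _ _ R L S T x) v p_aut).
have [g pg] := aut_agrees_rho_low bicay_GRR p_aut p_low.
exists g => v; rewrite -[p v](rhoVK g); congr (rho g _).
apply: (@aut_fixing_low_layers_id (rho g^-1 \o p)) => [a b /rho_inj /perm_inj // | a b | w lt_w].
  by rewrite /= theta_rho p_aut.
by rewrite /= pg ?rhoK.
Qed.

End Theta.

Theorem lemma4p2 (gT : finGroupType) (m : nat) (R L T S : {set gT}) (x : gT) :
  (3 <= m)%N ->
  cayley_subset R -> cayley_subset L -> cayley_subset T ->
  #|R| = #|L| -> (#|R| + #|S| = #|T| + 1)%N ->
  x \notin S ->
  is_mGRR (bicay R L S) ->
  (forall i0 i1 i : 'I_m, val i0 = 0%N -> val i1 = 1%N -> (2 <= i)%N ->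
     ~ nbhd_iso (@theta gT m R L S T x) (1, i0) (1, i) /\
     ~ nbhd_iso (@theta gT m R L S T x) (1, i1) (1, i)) ->
  is_mGRR (@theta gT m R L S T x).
Proof.
(* [x \notin S] only matters for m = 2, where x-edges and S-edges would both join G_0 and G_1. *)
case: m => [|[|[|n]]] // _ cR cL cT card_RL card_RST _ bicay_GRR not_iso.
have low_not_iso_high (i j : 'I_n.+3) :
    (i < 2)%N -> (2 <= j)%N -> ~ nbhd_iso (theta R L S T x) (1, i) (1, j).
  case: i => -[|[|//]] lt_i _ ge_j.
    exact: (not_iso (Ordinal lt_i) (inord 1) j erefl (inordK _) ge_j).1.
  exact: (not_iso ord0 (Ordinal lt_i) j erefl erefl ge_j).2.
split; split.
- exact: theta_irr.
- exact: theta_sym.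
- by exists (#|T| + 2)%N => v; rewrite (card_nbhd_rho (@theta_rho _ _ R L S T x)) card_nbhd_theta.
- exact: theta_rho.
- by move=> g [h i] [/(canRL (mulKg h)) ->]; rewrite mulVg.
- exact: card_rho_orbits.
- by move=> p; apply: theta_aut_rho.
Qed.
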